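(* Let $p_1>p_2\ge2$ be relatively prime positive integers, and write $p_1=ap_2+b$ with integers $a\ge1$ and $0<b<p_2$. Then the first $p_1+p_2$ terms of the D'Hondt sequence $S_1(p_1,p_2)$ are $$1^{a},\,2,\,1^{k_2},\,2,\,1^{k_3},\,2,\,\dots,\,1^{k_{p_2}},\,2,$$ where for $i=2,\dots,p_2$, $k_i=a+1$ if $i\in S$ and $k_i=a$ otherwise, with $S=\{\lceil jp_2/b\rceil : j=1,\dots,b\}$.
   Context: Stationary divisor method with cut point $c$ for votes $(p_1,p_2)$: seats are allocated one at a time. Initially $a_1=a_2=0$; each next seat goes to a party $i$ maximizing $p_i/(a_i+c)$, whose $a_i$ then increases by $1$. Ties are broken in favor of party $1$. D'Hondt's method is $c=1$. $S_1(p_1,p_2)$ is the infinite sequence of party labels (in $\{1,2\}$) of successive seats. The notation $1^k$ denotes $k$ consecutive $1$'s. *)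

From mathcomp Require Import all_boot all_order all_algebra.
Set Implicit Arguments. Unset Strict Implicit. Unset Printing Implicit Defensive.
Import Order.TTheory GRing.Theory Num.Theory.

Local Open Scope ring_scope.

(* Stationary divisor method with cut point c for two parties with votes
   (p1, p2).  [sdm_alloc c p1 p2 n] = (a1, a2) is the allocation after n seats
   have been distributed; [sdm_next c p1 p2 a] is the label (1 or 2) of the
   party getting the next seat from allocation a: party 1 iff
   p1/(a1+c) >= p2/(a2+c) (ties broken in favour of party 1). *)
Definition sdm_next (c : rat) (p1 p2 : nat) (a : nat * nat) : nat :=
  if (p2%:R / (a.2%:R + c)) <= (p1%:R / (a.1%:R + c)) then 1%N else 2%N.

Fixpoint sdm_alloc (c : rat) (p1 p2 : nat) (n : nat) : nat * nat :=
  match n with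
  | O => (0%N, 0%N)
  | S m => let a := sdm_alloc c p1 p2 m in
           if sdm_next c p1 p2 a == 1%N then (a.1.+1, a.2) else (a.1, a.2.+1)
  end.

(* The infinite label sequence, as a function of the 0-based seat index:
   term n (0-based) is the party receiving the (n+1)-th seat. *)
Definition sdm_seq (c : rat) (p1 p2 : nat) (n : nat) : nat :=
  sdm_next c p1 p2 (sdm_alloc c p1 p2 n).

Definition S1 (p1 p2 : nat) : nat -> nat := sdm_seq 1 p1 p2.

Definition Sset (p2 b : nat) : seq int :=
  [seq Num.ceil ((j * p2)%:R / b%:R : rat) | j <- iota 1 b].

Definition kval (a p2 b i : nat) : nat :=
  if (i%:Z \in Sset p2 b) then a.+1 else a.

Definition predicted (a p2 b : nat) : seq nat :=
  nseq a 1%N ++ [:: 2%N] ++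
  flatten [seq nseq (kval a p2 b i) 1%N ++ [:: 2%N] | i <- iota 2 (p2.-1)].

(* From the allocation (x, m), D'Hondt gives the next seat to party 1 iff
   p2 (x + 1) <= p1 (m + 1), i.e. iff x < floor((m + 1) p1 / p2).  So party 2 gets
   its (m + 1)-th seat exactly when party 1 holds floor((m + 1) p1 / p2) seats, and
   the i-th run of 1's has length floor(i p1/p2) - floor((i - 1) p1/p2)
   = a + floor(i b/p2) - floor((i - 1) b/p2).  As b < p2 the last difference is 0
   or 1, and it is 1 iff some j p2 lies in ((i - 1) b, i b], i.e. i = ceil(j p2/b). *)

From mathcomp Require Import all_boot all_order all_algebra zify.
Import Order.TTheory GRing.Theory Num.Theory.

Section DHondtWord.
Variables p1 p2 : nat.
Hypothesis p2_gt0 : 0 < p2.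

Definition share1 (m : nat) : nat := m * p1 %/ p2.

Lemma dhondt_nextE x m :
  sdm_next 1 p1 p2 (x, m) = if x < share1 m.+1 then 1 else 2.
Proof.
rewrite /sdm_next /= !natr1 ler_pdivrMr ?ltr0n // mulrAC ler_pdivlMr ?ltr0n //.
by rewrite -!natrM ler_nat /share1 leq_divRL // mulnC [(p1 * _)]mulnC.
Qed.

Definition dhondt_step (s : nat * nat) : nat * nat :=
  if sdm_next 1 p1 p2 s == 1 then (s.1.+1, s.2) else (s.1, s.2.+1).

Fixpoint dhondt_word (s : nat * nat) (n : nat) : seq nat :=
  if n is n'.+1 then sdm_next 1 p1 p2 s :: dhondt_word (dhondt_step s) n' else [::].

Lemma mkseq_S1_shift k n :
  mkseq (fun i => S1 p1 p2 (k + i)) n = dhondt_word (sdm_alloc 1 p1 p2 k) n.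
Proof.
elim: n k => [|n IHn] k //=.
rewrite /mkseq /= addn0 -[1]/(1 + 0) iotaDl -map_comp.
have := IHn k.+1; rewrite /mkseq => <-.
by congr (_ :: _); apply: eq_map => i /=; rewrite addnA addn1.
Qed.

Lemma dhondt_word_block m x d r : x + d = share1 m.+1 ->
  dhondt_word (x, m) (d + 1 + r) =
  nseq d 1 ++ 2 :: dhondt_word (share1 m.+1, m.+1) r.
Proof.
elim: d x => [|d IHd] x def_x.
  by rewrite addn0 in def_x; rewrite def_x /= /dhondt_step dhondt_nextE ltnn.
have x_lt : x < share1 m.+1 by lia.
by rewrite addSn /= /dhondt_step dhondt_nextE x_lt /= IHd // -def_x addSnnS.
Qed.

Lemma share1_homo : {homo share1 : m n / m <= n}.
Proof. by move=> m n le_mn; rewrite leq_div2r // leq_mul2r le_mn orbT. Qed.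

Lemma share1_p2 : share1 p2 = p1.
Proof. by rewrite /share1 mulKn. Qed.

Lemma dhondt_word_blocks k m : m + k = p2 ->
  dhondt_word (share1 m, m) (p1 + p2 - share1 m - m) =
  flatten [seq nseq (share1 i.+1 - share1 i) 1 ++ [:: 2] | i <- iota m k].
Proof.
elim: k m => [|k IHk] m def_p2.
  by rewrite addn0 in def_p2; rewrite def_p2 share1_p2 addKn subnn.
have le_m : share1 m <= share1 m.+1 by apply: share1_homo.
have le_p1 : share1 m.+1 <= p1 by rewrite -share1_p2 share1_homo //; lia.
have -> : p1 + p2 - share1 m - m =
          (share1 m.+1 - share1 m) + 1 + (p1 + p2 - share1 m.+1 - m.+1) by lia.
rewrite (@dhondt_word_block m (share1 m)) ?subnKC // IHk; first by rewrite /= -catA.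
by rewrite addSnnS.
Qed.

Lemma S1_prefix :
  mkseq (S1 p1 p2) (p1 + p2) =
  flatten [seq nseq (share1 i.+1 - share1 i) 1 ++ [:: 2] | i <- iota 0 p2].
Proof.
rewrite -(@dhondt_word_blocks p2 0) // /share1 mul0n div0n !subn0.
exact: (mkseq_S1_shift 0).
Qed.

End DHondtWord.

Lemma ceil_ratio_eq (n d k : nat) : 0 < d -> 0 < k ->
  (Num.ceil (n%:R / d%:R : rat) == k%:Z)%R = (k.-1 * d < n <= k * d).
Proof.
move=> d_gt0 k_gt0; rewrite ceil_eq.
have -> : (k%:Z - 1 = k.-1%:Z)%R by rewrite -[in LHS](prednK k_gt0) -addn1 PoszD addrK.
by rewrite ltr_pdivlMr ?ltr0n // ler_pdivrMr ?ltr0n // -!natrM ltr_nat ler_nat.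
Qed.

Lemma mem_Sset p2 b i : 0 < b -> 0 < i <= p2 ->
  (Posz i \in Sset p2 b) = ((i.-1 * b) %/ p2 < (i * b) %/ p2).
Proof.
move=> b_gt0 /andP[i_gt0 le_ip2]; have p2_gt0 : 0 < p2 by apply: leq_trans le_ip2.
apply/mapP/idP => [[j] | lt_div].
  rewrite mem_iota => _ /esym/eqP; rewrite ceil_ratio_eq // => /andP[lo hi].
  by apply: (@leq_trans j); [rewrite ltn_divLR | rewrite leq_divRL].
exists ((i * b) %/ p2); last first.
  by apply/esym/eqP; rewrite ceil_ratio_eq // -ltn_divLR // lt_div leq_divM.
rewrite mem_iota (leq_ltn_trans _ lt_div) // add1n ltnS.
by rewrite -[leqRHS](mulKn b p2_gt0) leq_div2r // leq_mul2r le_ip2 orbT.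
Qed.

Lemma divn_mulSl_leq i b d : b <= d -> 0 < d ->
  (i.+1 * b) %/ d <= (i * b) %/ d + 1.
Proof.
move=> le_bd d_gt0; rewrite -ltnS ltn_divLR //.
by have := ltn_ceil (i * b) d_gt0; nia.
Qed.

Lemma share1_gap p1 p2 a b i : 0 < b < p2 -> p1 = a * p2 + b -> i < p2 ->
  share1 p1 p2 i.+1 - share1 p1 p2 i = kval a p2 b i.+1.
Proof.
move=> /andP[b_gt0 lt_bp2] -> lt_ip2; have p2_gt0 : 0 < p2 by apply: leq_trans lt_bp2.
have share1E j : share1 (a * p2 + b) p2 j = j * a + (j * b) %/ p2.
  by rewrite /share1 mulnDr mulnA divnMDl.
rewrite !share1E /kval mem_Sset //=.
have := divn_mulSl_leq i b p2 (ltnW lt_bp2) p2_gt0.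
have : (i * b) %/ p2 <= (i.+1 * b) %/ p2 by rewrite leq_div2r // leq_mul2r leqnSn orbT.
set q := (i * b) %/ p2; set q' := (i.+1 * b) %/ p2.
by case: ifP; lia.
Qed.

Theorem mainTheorem13 (p1 p2 a b : nat) :
  (2 <= p2)%N -> (p2 < p1)%N -> coprime p1 p2 ->
  (1 <= a)%N -> (0 < b)%N -> (b < p2)%N -> p1 = (a * p2 + b)%N ->
  mkseq (S1 p1 p2) (p1 + p2) = predicted a p2 b.
Proof.
move=> _ _ _ _ b_gt0 lt_bp2 def_p1.
have p2_gt0 : 0 < p2 by apply: leq_trans lt_bp2.
rewrite S1_prefix //.
have -> : [seq nseq (share1 p1 p2 i.+1 - share1 p1 p2 i) 1 ++ [:: 2] | i <- iota 0 p2] =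
          [seq nseq (kval a p2 b i.+1) 1 ++ [:: 2] | i <- iota 0 p2].
  apply/eq_in_map => i; rewrite mem_iota add0n => /andP[_ lt_ip2].
  by rewrite (@share1_gap p1 p2 a b) ?b_gt0.
have kval1 : kval a p2 b 1 = a by rewrite /kval mem_Sset ?divn_small //= mul1n.
have -> : iota 0 p2 = 0 :: iota 1 p2.-1 by rewrite -{1}(prednK p2_gt0).
rewrite /predicted (iotaDl 1 1) -map_comp /= kval1 -catA.
by congr (_ ++ _ ++ flatten _); apply: eq_map => i /=; rewrite add1n.
Qed.
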